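(* Let $n\ge r\ge1$, let $B\in\mathbb{R}^{r\times r}$ have nonnegative entries with no zero row and no zero column, let $\Theta\in\mathbb{R}^{n\times r}$ be a normalized membership matrix, and let $D_1,D_2$ be $n\times n$ diagonal matrices with positive diagonal entries such that $A=D_1\Theta B\Theta^TD_2$ has entries in $[0,1]$. Let $P$ and $Q$ be the matrices obtained by scaling the rows of $A$ and of $A^T$, respectively, so that they are row stochastic, and let $M=\Theta^TP\Theta$, $N=\Theta^TQ\Theta$. If $\beta^2<1$, then the matrix equation $$X-\frac{\beta^2}{2}\big(MXM^T+NXN^T\big)=\Theta^T(PP^T+QQ^T)\Theta$$ has a unique solution $X\in\mathbb{R}^{r\times r}$, which is symmetric positive semidefinite. Furthermore, if $B$ is invertible then $X$ is positive definite.
   Context: The nodes $\{1,\ldots,n\}$ are partitioned into $r$ nonempty blocks; $\chi^{(i)}\in\{0,1\}^n$ is the indicator vector of the $i$-th block and $n_i$ its size. The normalized membership matrix $\Theta$ has $i$-th column $\Theta e_i=\chi^{(i)}/\sqrt{n_i}$, $i=1,\ldots,r$ (so its columns are orthonormal). Thus $P=\mathrm{Diag}(A\mathbf 1)^{-1}A$ and $Q=\mathrm{Diag}(A^T\mathbf 1)^{-1}A^T$ with $\mathbf 1$ the all-ones vector. *)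

From HB Require Import structures.
From mathcomp Require Import all_boot all_order all_algebra.
From mathcomp Require Import reals.
Set Implicit Arguments. Unset Strict Implicit. Unset Printing Implicit Defensive.
Import Order.TTheory GRing.Theory Num.Theory.
Local Open Scope ring_scope.

(* A partition of the nodes 'I_n into r blocks is encoded by the block
   assignment blk : 'I_n -> 'I_r; blocks are nonempty iff blk is surjective. *)
Definition blocks_nonempty (n r : nat) (blk : 'I_n -> 'I_r) : Prop :=
  forall k : 'I_r, exists i : 'I_n, blk i = k.

Definition block_size (n r : nat) (blk : 'I_n -> 'I_r) (k : 'I_r) : nat :=
  #|[set i : 'I_n | blk i == k]|.

Definition Theta (R : realType) (n r : nat) (blk : 'I_n -> 'I_r) : 'M[R]_(n, r) :=
  \matrix_(i < n, k < r) ((blk i == k)%:R / Num.sqrt ((block_size blk k)%:R)).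

Definition row_normalize (R : realType) (n : nat) (A : 'M[R]_n) : 'M[R]_n :=
  invmx (diag_mx (A *m const_mx 1)^T) *m A.

Definition is_sym (R : realType) (m : nat) (X : 'M[R]_m) : Prop := X^T = X.

Definition psd (R : realType) (m : nat) (X : 'M[R]_m) : Prop :=
  is_sym X /\ forall v : 'cV[R]_m, 0 <= (v^T *m X *m v) 0 0.

Definition pd (R : realType) (m : nat) (X : 'M[R]_m) : Prop :=
  is_sym X /\ forall v : 'cV[R]_m, v != 0 -> 0 < (v^T *m X *m v) 0 0.

(* Both block matrices M and N are entrywise nonnegative and fix the positive
   vector u = (sqrt n_k)_k, because P and Q are row stochastic and Theta u = 1.
   Hence the Stein operator T X = beta^2/2 (M X M^T + N X N^T) is a
   beta^2-contraction for the weighted max-norm max_ab |X_ab| / (u_a u_b), so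
   X |-> X - T X is injective, hence bijective.  If X - T X = C with C psd,
   then T maps the bound -v^T X v <= l (sum_k |v_k| u_k)^2 to the same bound
   with l replaced by beta^2 l, because M^T and N^T do not increase the
   weighted l1-norm sum_k |v_k| u_k; iterating shows X is psd.  The right-hand
   side C = (P^T Theta)^T (P^T Theta) + (Q^T Theta)^T (Q^T Theta) is a Gram
   matrix, and X = C + T X is pd as soon as C is, which holds when B is
   invertible since P^T Theta = D2 Theta B^T (Theta^T W Theta) with W a
   positive diagonal matrix. *)

From Pilot Require Import Defs.
From HB Require Import structures.
From mathcomp Require Import all_boot all_order all_algebra.
From mathcomp Require Import reals topology normedtype sequences ring lra.
Set Implicit Arguments. Unset Strict Implicit. Unset Printing Implicit Defensive.
Import Order.TTheory GRing.Theory Num.Theory numFieldNormedType.Exports.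
Local Open Scope classical_set_scope.
Local Open Scope ring_scope.

Lemma le0_geometric (R : realType) (q x a : R) : 0 <= q -> q < 1 ->
  (forall k, x <= q ^+ k * a) -> x <= 0.
Proof.
move=> q_ge0 q_lt1 x_le.
have qa_to0 : (fun k => q ^+ k * a) @ \oo --> 0.
  by rewrite -(mul0r a); apply: cvgMl; apply: cvg_expr; rewrite ger0_norm.
rewrite -(cvg_lim _ qa_to0) //; apply: limr_ge; last exact: nearW.
by apply/cvg_ex; exists 0.
Qed.

Lemma injective_linear_surj (K : fieldType) (vT : vectType K)
    (f : {linear vT -> vT}) : injective f -> forall y, exists x, f x = y.
Proof.
move=> f_inj y; exists ((linfun f)^-1%VF y).
have ker0 : lker (linfun f) == 0%VS.
  by apply/lker0P => x x' /=; rewrite !lfunE; exact: f_inj.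
by rewrite -[in RHS](lker0_lfunVK ker0 y) lfunE.
Qed.

Lemma mulmx_ge0 (R : numDomainType) m n p (A : 'M[R]_(m, n)) (B : 'M[R]_(n, p)) :
  (forall i j, 0 <= A i j) -> (forall i j, 0 <= B i j) -> forall i j, 0 <= (A *m B) i j.
Proof. by move=> A_ge0 B_ge0 i j; rewrite mxE sumr_ge0 // => k _; rewrite mulr_ge0. Qed.

Lemma diag_mx_ge0 (R : numDomainType) n (d : 'rV[R]_n) :
  (forall i, 0 <= d 0 i) -> forall i j, 0 <= diag_mx d i j.
Proof. by move=> d_ge0 i j; rewrite mxE mulrn_wge0. Qed.

Lemma unitmx_diag (R : fieldType) n (d : 'rV[R]_n) :
  (forall i, d 0 i != 0) -> diag_mx d \in unitmx.
Proof. by move=> d_neq0; rewrite unitmxE det_diag unitfE; apply/prodf_neq0. Qed.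

Lemma invmx_diag (R : fieldType) n (d : 'rV[R]_n) : (forall i, d 0 i != 0) ->
  invmx (diag_mx d) = diag_mx (\row_i (d 0 i)^-1).
Proof.
move=> d_neq0.
have diag_mulV : diag_mx d *m diag_mx (\row_i (d 0 i)^-1) = 1%:M.
  apply/matrixP => i j; rewrite mul_diag_mx !mxE.
  by case: eqP => [->|_]; rewrite ?mulr1n ?divff ?mulr0n ?mulr0.
by rewrite -[invmx _]mulmx1 -diag_mulV mulKmx ?unitmx_diag.
Qed.

Lemma gram_sum_conj (R : comRingType) m k (T : 'M[R]_(m, k)) (P Q : 'M[R]_m) :
  T^T *m (P *m P^T + Q *m Q^T) *m T =
  (P^T *m T)^T *m (P^T *m T) + (Q^T *m T)^T *m (Q^T *m T).
Proof. by rewrite !trmx_mul !trmxK mulmxDr mulmxDl !mulmxA. Qed.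

Definition qform (R : ringType) n (X : 'M[R]_n) (v : 'cV[R]_n) : R := (v^T *m X *m v) 0 0.

Lemma qformD (R : ringType) n (X Y : 'M[R]_n) v :
  qform (X + Y) v = qform X v + qform Y v.
Proof. by rewrite /qform mulmxDr mulmxDl mxE. Qed.

Lemma qform_diagE (R : comRingType) n (e : 'rV[R]_n) (w : 'cV[R]_n) :
  qform (diag_mx e) w = \sum_j e 0 j * w j 0 ^+ 2.
Proof.
rewrite /qform mxE; apply: eq_bigr => j _.
by rewrite mul_mx_diag !mxE mulrAC -expr2 mulrC.
Qed.

Lemma qform_diag_gt0 (R : realDomainType) n (e : 'rV[R]_n) (w : 'cV[R]_n) :
  (forall i, 0 < e 0 i) -> w != 0 -> 0 < qform (diag_mx e) w.
Proof.
move=> e_gt0 w_neq0.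
have terms_ge0 j : true -> 0 <= e 0 j * w j 0 ^+ 2 by rewrite mulr_ge0 ?sqr_ge0 // ltW.
rewrite qform_diagE lt_def sumr_ge0 ?andbT //.
apply: contraNneq w_neq0 => /(psumr_eq0P terms_ge0) sum0.
apply/eqP/matrixP => j k; rewrite (ord1 k) mxE.
by have /eqP := sum0 j isT; rewrite mulf_eq0 gt_eqF //= sqrf_eq0 => /eqP.
Qed.

Section Semidefinite.
Variable R : realType.

(* [is_sym] alone would refer to the sesquilinear-form predicate of MathComp. *)

Lemma qform_conj m n (K : 'M[R]_(m, n)) X v :
  qform (K *m X *m K^T) v = qform X (K^T *m v).
Proof. by rewrite /qform trmx_mul trmxK !mulmxA. Qed.

Lemma qform_gram m n (W : 'M[R]_(m, n)) v :
  qform (W^T *m W) v = qform (diag_mx (const_mx 1)) (W *m v).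
Proof. by rewrite diag_const_mx /qform mulmx1 trmx_mul !mulmxA. Qed.

Lemma psd_gram m n (W : 'M[R]_(m, n)) : psd (W^T *m W).
Proof.
split=> [|v]; first by rewrite /Defs.is_sym trmx_mul trmxK.
change (0 <= qform (W^T *m W) v); rewrite qform_gram qform_diagE.
by rewrite sumr_ge0 // => j _; rewrite mxE mul1r sqr_ge0.
Qed.

Lemma pd_gram m n (W : 'M[R]_(m, n)) :
  (forall v : 'cV[R]_n, v != 0 -> W *m v != 0) -> pd (W^T *m W).
Proof.
move=> W_inj; split=> [|v v_neq0]; first exact: (psd_gram W).1.
change (0 < qform (W^T *m W) v); rewrite qform_gram qform_diag_gt0 ?W_inj // => i.
by rewrite mxE.
Qed.

Lemma psdD n (X Y : 'M[R]_n) : psd X -> psd Y -> psd (X + Y).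
Proof.
move=> [X_sym X_ge0] [Y_sym Y_ge0]; split=> [|v].
  by rewrite /Defs.is_sym linearD /= X_sym Y_sym.
by change (0 <= qform (X + Y) v); rewrite qformD addr_ge0 ?X_ge0 ?Y_ge0.
Qed.

Lemma pd_psdD n (X Y : 'M[R]_n) : pd X -> psd Y -> pd (X + Y).
Proof.
move=> [X_sym X_gt0] [Y_sym Y_ge0]; split=> [|v v_neq0].
  by rewrite /Defs.is_sym linearD /= X_sym Y_sym.
by change (0 < qform (X + Y) v); rewrite qformD ltr_pwDl ?X_gt0 ?Y_ge0.
Qed.

Lemma psdZ n a (X : 'M[R]_n) : 0 <= a -> psd X -> psd (a *: X).
Proof.
move=> a_ge0 [X_sym X_ge0]; split=> [|v]; first by rewrite /Defs.is_sym linearZ /= X_sym.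
by rewrite -scalemxAr -scalemxAl mxE mulr_ge0.
Qed.

Lemma psd_conj m n (K : 'M[R]_(m, n)) X : psd X -> psd (K *m X *m K^T).
Proof.
move=> [X_sym X_ge0]; split=> [|v].
  by rewrite /Defs.is_sym !trmx_mul trmxK X_sym mulmxA.
by change (0 <= qform (K *m X *m K^T) v); rewrite qform_conj; apply: X_ge0.
Qed.

End Semidefinite.

Section SteinEquation.
Variables (R : realType) (r : nat) (M N : 'M[R]_r) (u : 'cV[R]_r) (q : R).
Hypotheses (M_ge0 : forall i j, 0 <= M i j) (N_ge0 : forall i j, 0 <= N i j).
Hypotheses (Mu : M *m u = u) (Nu : N *m u = u) (u_gt0 : forall k, 0 < u k 0).
Hypotheses (q_ge0 : 0 <= q) (q_lt1 : q < 1).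
Implicit Types (X Y C K : 'M[R]_r) (v : 'cV[R]_r).

Definition stein (X : 'M[R]_r) := (q / 2) *: (M *m X *m M^T + N *m X *m N^T).

Lemma stein_linear : linear stein.
Proof.
move=> a X Y; rewrite /stein !(mulmxDr, mulmxDl) -!(scalemxAr, scalemxAl).
rewrite addrACA -scalerDr [a *: (_ *: _)]scalerA [a * _]mulrC.
by rewrite -[(q / 2 * a) *: _]scalerA -scalerDr.
Qed.

Definition stein_residual (X : 'M[R]_r) := X - stein X.

Lemma stein_residual_linear : linear stein_residual.
Proof.
by move=> a X Y; rewrite /stein_residual stein_linear opprD addrACA scalerBr.
Qed.

HB.instance Definition _ :=
  GRing.isLinear.Build R 'M[R]_r 'M[R]_r _ stein_residual stein_residual_linear.

Definition wmax (X : 'M[R]_r) : R :=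
  \big[Num.max/0]_(ab : 'I_r * 'I_r) (`|X ab.1 ab.2| / (u ab.1 0 * u ab.2 0)).

Lemma wmax_ge0 X : 0 <= wmax X.
Proof. exact: bigmax_ge_id. Qed.

Lemma le_wmax X a b : `|X a b| <= wmax X * (u a 0 * u b 0).
Proof. by rewrite -ler_pdivrMr ?mulr_gt0 //; exact: (le_bigmax _ _ (a, b)). Qed.

Lemma wmax_le X m : 0 <= m -> (forall a b, `|X a b| <= m * (u a 0 * u b 0)) ->
  wmax X <= m.
Proof.
by move=> m_ge0 X_le; apply: bigmax_le => // -[a b] _; rewrite ler_pdivrMr ?mulr_gt0.
Qed.

Lemma conj_bound K X m : (forall i j, 0 <= K i j) -> K *m u = u ->
  (forall c d, `|X c d| <= m * (u c 0 * u d 0)) ->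
  forall a b, `|(K *m X *m K^T) a b| <= m * (u a 0 * u b 0).
Proof.
move=> K_ge0 Ku X_le a b.
have uE i : u i 0 = \sum_c K i c * u c 0 by rewrite -{1}Ku mxE.
have -> : m * (u a 0 * u b 0) = \sum_d (\sum_c K a c * (m * (u c 0 * u d 0))) * K b d.
  rewrite uE [u b 0]uE mulrA mulr_sumr; apply: eq_bigr => d _.
  by rewrite mulr_sumr !mulr_suml; apply: eq_bigr => c _; ring.
rewrite mxE (le_trans (ler_norm_sum _ _ _)) // ler_sum // => d _.
rewrite !mxE normrM (ger0_norm (K_ge0 _ _)) ler_wpM2r //.
rewrite (le_trans (ler_norm_sum _ _ _)) // ler_sum // => c _.
by rewrite normrM (ger0_norm (K_ge0 _ _)) ler_wpM2l.
Qed.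

Lemma wmax_stein X : wmax (stein X) <= q * wmax X.
Proof.
apply: wmax_le => [|a b]; first by rewrite mulr_ge0 ?wmax_ge0.
have q2_ge0 : 0 <= q / 2 by rewrite divr_ge0.
have MXM := conj_bound M_ge0 Mu (le_wmax X) a b.
have NXN := conj_bound N_ge0 Nu (le_wmax X) a b.
have -> : q * wmax X * (u a 0 * u b 0) =
    q / 2 * (wmax X * (u a 0 * u b 0) + wmax X * (u a 0 * u b 0)) by field.
rewrite mxE [((_ + _) : 'M_r) a b]mxE normrM ger0_norm // ler_wpM2l //.
exact: le_trans (ler_normD _ _) (lerD MXM NXN).
Qed.

Lemma stein_residual_inj : injective stein_residual.
Proof.
apply: (raddf_inj (f := stein_residual)) => X /eqP; rewrite subr_eq0 => /eqP X_fix.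
have wX0 : wmax X <= 0.
  have := wmax_stein X; rewrite -X_fix -subr_le0 -{1}[wmax X]mul1r -mulrBl.
  by rewrite pmulr_rle0 // subr_gt0.
apply/matrixP => a b; rewrite mxE; apply/normr0_eq0/le_anti; rewrite normr_ge0 andbT.
by rewrite (le_trans (le_wmax X a b)) // mulr_le0_ge0 ?mulr_ge0 // ltW.
Qed.

Lemma stein_residual_surj C : exists X, stein_residual X = C.
Proof. exact: (injective_linear_surj stein_residual_inj). Qed.

Lemma stein_tr X : (stein X)^T = stein X^T.
Proof. by rewrite /stein linearZ linearD /= !trmx_mul !trmxK !mulmxA. Qed.

Lemma stein_psd X : psd X -> psd (stein X).
Proof.
by move=> X_psd; apply: psdZ; rewrite ?divr_ge0 //; apply: psdD; apply: psd_conj.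
Qed.

Definition wsum v : R := \sum_k `|v k 0| * u k 0.

Lemma wsum_ge0 v : 0 <= wsum v.
Proof. by rewrite sumr_ge0 // => k _; rewrite mulr_ge0 // ltW. Qed.

Lemma wsum_trmx_le K v : (forall i j, 0 <= K i j) -> K *m u = u ->
  wsum (K^T *m v) <= wsum v.
Proof.
move=> K_ge0 Ku; rewrite /wsum.
apply: (@le_trans _ _ (\sum_k \sum_a K a k * `|v a 0| * u k 0)).
  apply: ler_sum => k _; rewrite mxE -mulr_suml; apply: ler_wpM2r; first exact: ltW.
  rewrite (le_trans (ler_norm_sum _ _ _)) // ler_sum // => a _.
  by rewrite !mxE normrM ger0_norm.
rewrite exchange_big /=; apply: ler_sum => a _.
by rewrite -{2}Ku mxE big_distrr /=; apply: ler_sum => k _; rewrite mulrCA mulrA.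
Qed.

Lemma qformE X v : qform X v = \sum_a \sum_c v a 0 * X a c * v c 0.
Proof.
rewrite /qform mxE; under eq_bigr do rewrite mxE big_distrl.
by rewrite exchange_big; apply: eq_bigr => a _; apply: eq_bigr => c _; rewrite !mxE.
Qed.

Lemma qform_bound X v : `|qform X v| <= wmax X * wsum v ^+ 2.
Proof.
have -> : wmax X * wsum v ^+ 2 =
    \sum_a \sum_c `|v a 0| * (wmax X * (u a 0 * u c 0)) * `|v c 0|.
  rewrite /wsum expr2 mulr_suml mulr_sumr; apply: eq_bigr => a _.
  by rewrite mulr_sumr mulr_sumr; apply: eq_bigr => c _; ring.
rewrite qformE (le_trans (ler_norm_sum _ _ _)) // ler_sum // => a _.
rewrite (le_trans (ler_norm_sum _ _ _)) // ler_sum // => c _.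
by rewrite !normrM ler_wpM2r // ler_wpM2l // le_wmax.
Qed.

Lemma qform_stein X v :
  qform (stein X) v = q / 2 * (qform X (M^T *m v) + qform X (N^T *m v)).
Proof. by rewrite -!qform_conj -qformD /qform -scalemxAr -scalemxAl mxE. Qed.

Section FixedPoint.
Variables (C X : 'M[R]_r).
Hypotheses (XC : stein_residual X = C) (C_ge0 : forall v, 0 <= qform C v).

Lemma stein_fixpoint_neg_bound l : 0 <= l ->
    (forall v, - qform X v <= l * wsum v ^+ 2) ->
  forall v, - qform X v <= q * l * wsum v ^+ 2.
Proof.
move=> l_ge0 X_ge v; set L := l * wsum v ^+ 2.
have X_eq : qform X v = qform C v + q / 2 * (qform X (M^T *m v) + qform X (N^T *m v)).
  by rewrite -qform_stein -qformD -XC subrK.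
have X_ge_conj K : (forall i j, 0 <= K i j) -> K *m u = u -> - qform X (K^T *m v) <= L.
  move=> K_ge0 Ku; apply: le_trans (X_ge _) _; rewrite ler_wpM2l //.
  by rewrite lerXn2r ?nnegrE ?wsum_ge0 ?wsum_trmx_le.
have q2_ge0 : 0 <= q / 2 by rewrite divr_ge0.
have := ler_wpM2l q2_ge0 (lerD (X_ge_conj _ M_ge0 Mu) (X_ge_conj _ N_ge0 Nu)).
have -> : q * l * wsum v ^+ 2 = q / 2 * (L + L) by rewrite /L; field.
have := C_ge0 v; rewrite X_eq -opprD mulrN; lra.
Qed.

Lemma stein_fixpoint_qform_ge0 v : 0 <= qform X v.
Proof.
have bound k w : - qform X w <= q ^+ k * wmax X * wsum w ^+ 2.
  elim: k w => [|k IHk] w.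
    by rewrite expr0 mul1r (le_trans _ (qform_bound X w)) // -normrN ler_norm.
  rewrite exprS -[q * q ^+ k * _]mulrA; apply: stein_fixpoint_neg_bound => //.
  by rewrite mulr_ge0 ?exprn_ge0 ?wmax_ge0.
rewrite -oppr_le0.
by apply: (le0_geometric (a := wmax X * wsum v ^+ 2) q_ge0 q_lt1) => k; rewrite mulrA.
Qed.

End FixedPoint.

Theorem stein_solution C : psd C ->
  exists X, [/\ stein_residual X = C, forall Y, stein_residual Y = C -> Y = X,
    psd X & pd C -> pd X].
Proof.
move=> [C_sym C_ge0]; have [X XC] := stein_residual_surj C.
have X_uniq Y : stein_residual Y = C -> Y = X by rewrite -XC; exact: stein_residual_inj.
have X_psd : psd X.
  split; last exact: stein_fixpoint_qform_ge0 XC C_ge0.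
  by apply: X_uniq; rewrite /stein_residual -stein_tr -linearB /= -/(stein_residual X) XC.
exists X; split=> // C_pd; have -> : X = C + stein X by rewrite -XC subrK.
exact: pd_psdD (stein_psd X_psd).
Qed.

End SteinEquation.

Section RowNormalize.
Variables (R : realType) (n : nat) (A : 'M[R]_n).
Hypothesis A_ge0 : forall i j, 0 <= A i j.
Hypothesis rowsum_gt0 : forall i, 0 < (A *m const_mx 1 : 'cV[R]_n) i 0.

Lemma row_normalizeE :
  row_normalize A = diag_mx (\row_i ((A *m const_mx 1 : 'cV[R]_n) i 0)^-1) *m A.
Proof.
rewrite /row_normalize invmx_diag => [|i]; last by rewrite mxE gt_eqF.
by congr (diag_mx _ *m _); apply/rowP => i; rewrite !mxE.
Qed.

Lemma row_normalize_ge0 i j : 0 <= row_normalize A i j.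
Proof. by rewrite row_normalizeE mul_diag_mx mxE mulr_ge0 ?A_ge0 // mxE invr_ge0 ltW. Qed.

Lemma row_normalize_stochastic : row_normalize A *m const_mx 1 = const_mx 1 :> 'cV[R]_n.
Proof.
apply/matrixP => i k; rewrite (ord1 k) row_normalizeE -mulmxA mul_diag_mx mxE.
by rewrite mxE mulVf ?gt_eqF // mxE.
Qed.

End RowNormalize.

Section Membership.
Variables (R : realType) (n r : nat) (blk : 'I_n -> 'I_r).
Hypothesis blk_onto : blocks_nonempty blk.
Local Notation Th := (Theta R blk).

Definition block_sqrt (k : 'I_r) : R := Num.sqrt (block_size blk k)%:R.

Definition block_sqrts : 'cV[R]_r := \col_k block_sqrt k.

Lemma block_sqrt_gt0 k : 0 < block_sqrt k.
Proof.
have [i blk_i] := blk_onto k.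
by rewrite sqrtr_gt0 ltr0n; apply/card_gt0P; exists i; rewrite inE blk_i.
Qed.

Lemma Theta_ge0 i k : 0 <= Th i k.
Proof. by rewrite mxE divr_ge0 ?sqrtr_ge0. Qed.

Lemma mul_ThetaE m (X : 'M[R]_(r, m)) i l :
  (Th *m X) i l = X (blk i) l / block_sqrt (blk i).
Proof.
rewrite mxE (bigD1 (blk i)) //= big1 ?addr0 => [|k k_neq]; rewrite mxE.
  by rewrite eqxx mul1r mulrC.
by rewrite eq_sym (negbTE k_neq) !mul0r.
Qed.

Lemma mul_Theta_eq0 (v : 'cV[R]_r) : Th *m v = 0 -> v = 0.
Proof.
move=> Thv0; apply/matrixP => k j; rewrite (ord1 j) mxE.
have [i blk_i] := blk_onto k.
have /eqP := congr1 (fun X : 'cV_n => X i 0) Thv0; rewrite mul_ThetaE mxE blk_i.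
by rewrite mulf_eq0 invr_eq0 (gt_eqF (block_sqrt_gt0 _)) orbF => /eqP.
Qed.

Lemma Theta_block_sqrts : Th *m block_sqrts = const_mx 1.
Proof.
by apply/matrixP => i j; rewrite mul_ThetaE !mxE divff // gt_eqF ?block_sqrt_gt0.
Qed.

Lemma trmx_Theta_const1 : Th^T *m const_mx 1 = block_sqrts.
Proof.
apply/matrixP => k j; rewrite !mxE.
rewrite (eq_bigr (fun i => if blk i == k then (block_sqrt k)^-1 else 0)); last first.
  by move=> i _; rewrite !mxE mulr1; case: eqP => _; rewrite ?mul1r ?mul0r.
rewrite -big_mkcond sumr_const /= -mulr_natr.
have -> : #|[pred i | blk i == k]| = block_size blk k by rewrite /block_size cardsE.
rewrite -[_%:R](@sqr_sqrtr R) ?ler0n // -/(block_sqrt k) expr2 mulrA.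
by rewrite mulVf ?mul1r // gt_eqF ?block_sqrt_gt0.
Qed.

Lemma mul_trmx_ThetaE m (X : 'M[R]_(m, r)) i j :
  (X *m Th^T) i j = X i (blk j) / block_sqrt (blk j).
Proof. by rewrite -[X *m _]trmxK trmx_mul trmxK mxE mul_ThetaE mxE. Qed.

Lemma Theta_weighted_gram_neq0 (e : 'rV[R]_n) (v : 'cV[R]_r) :
  (forall i, 0 < e 0 i) -> v != 0 -> Th^T *m diag_mx e *m Th *m v != 0.
Proof.
move=> e_gt0 v_neq0.
have Thv_neq0 : Th *m v != 0 by apply: contraNneq v_neq0 => /mul_Theta_eq0 ->.
have := qform_diag_gt0 e_gt0 Thv_neq0; rewrite /qform trmx_mul -!mulmxA.
by apply: contraTneq => ->; rewrite mulmx0 mxE ltxx.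
Qed.

End Membership.

Section BlockModel.
Variables (R : realType) (n r : nat) (blk : 'I_n -> 'I_r).
Variables (B : 'M[R]_r) (d1 d2 : 'rV[R]_n).
Hypotheses (blk_onto : blocks_nonempty blk) (B_ge0 : forall k l, 0 <= B k l).
Hypotheses (B_row : forall k, exists l, B k l != 0).
Hypotheses (d1_gt0 : forall i, 0 < d1 0 i) (d2_gt0 : forall i, 0 < d2 0 i).
Local Notation Th := (Theta R blk).

Definition block_model := diag_mx d1 *m Th *m B *m Th^T *m diag_mx d2.

Definition block_rowsum i := (block_model *m const_mx 1 : 'cV[R]_n) i 0.

Lemma block_modelE i j : block_model i j = d1 0 i * B (blk i) (blk j)
  / block_sqrt R blk (blk i) / block_sqrt R blk (blk j) * d2 0 j.
Proof.
rewrite /block_model mul_mx_diag mxE mul_trmx_ThetaE -!mulmxA mul_diag_mx mxE.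
by rewrite mul_ThetaE !mulrA.
Qed.

Lemma block_model_ge0 i j : 0 <= block_model i j.
Proof.
have Th_ge0 := @Theta_ge0 R n r blk.
have ThT_ge0 i' j' : 0 <= Th^T i' j' by rewrite mxE Th_ge0.
have D_ge0 (d : 'rV[R]_n) : (forall k, 0 < d 0 k) -> forall i j, 0 <= diag_mx d i j.
  by move=> d_gt0; apply: diag_mx_ge0 => k; apply: ltW.
by do !apply: mulmx_ge0 => //; apply: D_ge0.
Qed.

Lemma block_rowsum_gt0 i : 0 < block_rowsum i.
Proof.
have [l Bl_neq0] := B_row (blk i); have [j blk_j] := blk_onto l.
rewrite /block_rowsum mxE (bigD1 j) //= ltr_pwDl //.
  rewrite [const_mx _ _ _]mxE mulr1 block_modelE blk_j.
  rewrite !mulr_gt0 ?invr_gt0 ?block_sqrt_gt0 //.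
  by rewrite lt_def Bl_neq0 B_ge0.
by rewrite sumr_ge0 // => k _; rewrite [const_mx _ _ _]mxE mulr1 block_model_ge0.
Qed.

Definition block_transition := Th^T *m row_normalize block_model *m Th.

Lemma block_transition_ge0 i j : 0 <= block_transition i j.
Proof.
have ThT_ge0 i' j' : 0 <= Th^T i' j' by rewrite mxE Theta_ge0.
apply: mulmx_ge0 (@Theta_ge0 R n r blk) i j; apply: mulmx_ge0 ThT_ge0 _.
exact: row_normalize_ge0 block_model_ge0 block_rowsum_gt0.
Qed.

Lemma block_transition_sqrts :
  block_transition *m block_sqrts R blk = block_sqrts R blk.
Proof.
rewrite /block_transition -mulmxA Theta_block_sqrts // -mulmxA.
by rewrite row_normalize_stochastic ?trmx_Theta_const1 //; exact: block_rowsum_gt0.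
Qed.

Definition row_weights : 'rV[R]_n := \row_i (d1 0 i / block_rowsum i).

Lemma trmx_row_normalize_Theta : (row_normalize block_model)^T *m Th =
  diag_mx d2 *m Th *m B^T *m (Th^T *m diag_mx row_weights *m Th).
Proof.
have weightsE :
    diag_mx d1 *m diag_mx (\row_i (block_rowsum i)^-1) = diag_mx row_weights.
  apply/matrixP => i j; rewrite mul_diag_mx !mxE.
  by case: eqP => [->|_]; rewrite ?mulr1n ?mulr0n ?mulr0.
rewrite row_normalizeE; last exact: block_rowsum_gt0.
by rewrite -weightsE /block_model !trmx_mul !tr_diag_mx trmxK !mulmxA.
Qed.

Lemma trmx_row_normalize_Theta_neq0 (v : 'cV[R]_r) : B \in unitmx -> v != 0 ->
  (row_normalize block_model)^T *m Th *m v != 0.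
Proof.
move=> B_unit v_neq0; have D2_unit : diag_mx d2 \in unitmx.
  by apply: unitmx_diag => i; rewrite gt_eqF.
have weights_gt0 i : 0 < row_weights 0 i by rewrite mxE divr_gt0 ?block_rowsum_gt0.
apply: contraNneq (Theta_weighted_gram_neq0 blk_onto weights_gt0 v_neq0).
rewrite trmx_row_normalize_Theta -!mulmxA => /(congr1 (mulmx (invmx (diag_mx d2)))).
rewrite mulKmx // mulmx0 => /(mul_Theta_eq0 blk_onto) /(congr1 (mulmx (invmx B^T))).
by rewrite mulKmx ?unitmx_tr // mulmx0 => ->.
Qed.

End BlockModel.

Lemma trmx_block_model (R : realType) n r (blk : 'I_n -> 'I_r) B (d1 d2 : 'rV[R]_n) :
  (block_model blk B d1 d2)^T = block_model blk B^T d2 d1.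
Proof. by rewrite /block_model !trmx_mul !tr_diag_mx trmxK !mulmxA. Qed.

Unset Implicit Arguments.

Theorem lemma4 (R : realType) (n r : nat) (blk : 'I_n -> 'I_r)
    (B : 'M[R]_r) (d1 d2 : 'rV[R]_n) (beta : R) :
  (1 <= r)%N -> (r <= n)%N ->
  blocks_nonempty blk ->
  (forall k l, 0 <= B k l) ->
  (forall k, exists l, B k l != 0) ->
  (forall l, exists k, B k l != 0) ->
  (forall i, 0 < d1 0 i) -> (forall i, 0 < d2 0 i) ->
  let A := diag_mx d1 *m Theta R blk *m B *m (Theta R blk)^T *m diag_mx d2 in
  (forall i j, 0 <= A i j <= 1) ->
  let P := row_normalize A in
  let Q := row_normalize A^T in
  let M := (Theta R blk)^T *m P *m Theta R blk in
  let N := (Theta R blk)^T *m Q *m Theta R blk in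
  beta ^+ 2 < 1 ->
  let F := fun X : 'M[R]_r =>
    X - (beta ^+ 2 / 2) *: (M *m X *m M^T + N *m X *m N^T) =
    (Theta R blk)^T *m (P *m P^T + Q *m Q^T) *m Theta R blk in
  exists X : 'M[R]_r,
    [/\ F X, (forall Y, F Y -> Y = X), psd X & (B \in unitmx -> pd X)].
Proof.
(* The bounds on r and on the entries of A are not needed. *)
move=> _ _ blk_onto B_ge0 B_row B_col d1_gt0 d2_gt0 A _ P Q M N beta_lt1 F.
have BT_ge0 k l : 0 <= B^T k l by rewrite mxE.
have BT_row k : exists l, B^T k l != 0 by have [l ?] := B_col k; exists l; rewrite mxE.
have N_eq : N = block_transition blk B^T d2 d1 by rewrite /N /Q trmx_block_model.
have M_ge0 := block_transition_ge0 blk_onto B_ge0 B_row d1_gt0 d2_gt0.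
have N_ge0 : forall k l, 0 <= N k l.
  by rewrite N_eq; exact: block_transition_ge0.
have Mu := block_transition_sqrts blk_onto B_ge0 B_row d1_gt0 d2_gt0.
have Nu : N *m block_sqrts R blk = block_sqrts R blk.
  by rewrite N_eq; exact: block_transition_sqrts.
have u_gt0 k : 0 < block_sqrts R blk k 0 by rewrite mxE block_sqrt_gt0.
pose C := (Theta R blk)^T *m (P *m P^T + Q *m Q^T) *m Theta R blk.
have C_psd : psd C by rewrite /C gram_sum_conj; apply: psdD; apply: psd_gram.
have [X [XC X_uniq X_psd X_pd]] :=
  stein_solution M_ge0 N_ge0 Mu Nu u_gt0 (sqr_ge0 beta) beta_lt1 C_psd.
exists X; split=> // B_unit; apply: X_pd; rewrite /C gram_sum_conj.
apply: pd_psdD (psd_gram _); apply: pd_gram => v.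
exact: trmx_row_normalize_Theta_neq0.
Qed.
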